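(* Let $L$ be a family of lattice-closed logics such that every $L$-definable language has a syntactic algebra. The following statements are equivalent: (1) $L$ is varietal; (2) for every $L$-definable language $K\subseteq\mathbb{M}\Sigma$, the syntactic algebra $\mathrm{Syn}(K)$ is $L$-definable.
   Context: Fix a set $\Xi$ of sorts; $\mathsf{Pos}^\Xi$: $\Xi$-sorted families of partial orders with sort-wise monotone maps. $\mathbb{M}$ is a monad on $\mathsf{Pos}^\Xi$ ($\mathrm{flat},\mathrm{sing}$) preserving injective, surjective, bijective functions and preimages and using the standard ordering. $\mathbb{M}$-algebras $\langle A,\pi\rangle$: $\pi\circ\mathbb{M}\pi=\pi\circ\mathrm{flat}$, $\pi\circ\mathrm{sing}=\mathrm{id}$. Finitary: sort-wise finite and finitely generated. Alphabet: finite unordered $\Sigma$; language: $K\subseteq\mathbb{M}_\xi\Sigma$; $\mathfrak{A}$ recognises $K$ if $K=\varphi^{-1}[P]$ for a morphism $\varphi:\mathbb{M}\Sigma\to\mathfrak{A}$ and upwards closed $P$. Contexts with hole of sort $\zeta$: $p\in\mathbb{M}(\Sigma+\{\Box\})$, $p[s]$ the image under the algebra morphism extending $\Box\mapsto s$, $c\mapsto\mathrm{sing}(c)$; $p^{-1}[K]=\{s:p[s]\in K\}$. Syntactic congruence $s\preceq_K t$ ($s,t$ of sort $\zeta$) iff $p[s]\in K\Rightarrow p[t]\in K$ for all contexts $p\in\mathbb{M}_\xi(\Sigma+\{\Box\})$ with hole of sort $\zeta$; $K$ has a syntactic algebra if $\preceq_K$ is a congruence ordering ($\mathbb{M}q(s)\leq\mathbb{M}q(t)\Rightarrow\pi(s)\preceq_K\pi(t)$,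 $q$ quotient map) with sort-wise finite quotient $\mathrm{Syn}(K)=\mathbb{M}\Sigma/{\preceq_K}$. Variety of languages: family of classes of languages over each alphabet closed under finite unions and intersections, inverse morphisms $\psi^{-1}[K]$ ($\psi:\mathbb{M}\Sigma\to\mathbb{M}\Gamma$ algebra morphisms), derivatives. A logic: $\Xi$-sorted formulae and models with satisfaction; lattice closed if definable classes of each sort are closed under finite unions and intersections. A family of logics $L$ assigns to each alphabet $\Sigma$ a logic $L[\Sigma]$ with models $\mathbb{M}\Sigma$, and to $f:\Sigma\to\Gamma$ a sort-preserving $\lambda_f:L[\Gamma]\to L[\Sigma]$ with $s\models\lambda_f(\varphi)\iff\mathbb{M}f(s)\models\varphi$. $K\subseteq\mathbb{M}_\xi\Sigma$ is $L$-definable if it equals $\{s:s\models\varphi\}$ for some $\varphi\in L_\xi[\Sigma]$; for a finite ordered $C$, $K\subseteq\mathbb{M}C$ is $L$-definable if its preimage under $\mathbb{M}\iota$ ($\iota$ the identity from $C$ with trivial order to $C$) is. $L$ is varietal if the $L$-definable languages form a variety of languages. A finite $C\subseteq A$ is $L$-definably embedded if $\pi^{-1}(\uparrow a)\cap\mathbb{M}C$ is $L$-definable for all $a\in A$; $\mathfrak{A}$ is $L$-definable if finitary and all finite subsets are $L$-definably embedded. *)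

From Stdlib Require Import List ProofIrrelevance FunctionalExtensionality PropExtensionality.
Set Implicit Arguments.
Unset Strict Implicit.

Section PosDefs.
Variable Xi : Type.

Record PosF := {
  car :> Xi -> Type;
  le : forall x, car x -> car x -> Prop;
  le_refl : forall x a, @le x a a;
  le_trans : forall x a b c, @le x a b -> @le x b c -> @le x a c;
  le_antisym : forall x a b, @le x a b -> @le x b a -> a = b }.
Arguments le {p x}.

Record Hom (A B : PosF) := {
  hmap :> forall x, car A x -> car B x;
  hmono : forall x (a b : car A x), le a b -> le (hmap a) (hmap b) }.

Definition idH (A : PosF) : Hom A A :=
  {| hmap := fun x a => a; hmono := fun x a b h => h |}.

Definition compH (A B C : PosF) (g : Hom B C) (f : Hom A B) : Hom A C :=
  {| hmap := fun x a => g x (f x a);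
     hmono := fun x a b h => hmono g (hmono f h) |}.

Definition disc (X : Xi -> Type) : PosF.
Proof.
  refine {| car := X; le := fun x a b => a = b |}.
  - reflexivity.
  - intros; subst; reflexivity.
  - intros; assumption.
Defined.

Definition discHomTo (X : Xi -> Type) (A : PosF) (f : forall x, X x -> car A x)
  : Hom (disc X) A.
Proof.
  refine (@Build_Hom (disc X) A f _).
  intros x a b h; simpl in h; subst; apply le_refl.
Defined.

Definition discHom (X Y : Xi -> Type) (f : forall x, X x -> Y x)
  : Hom (disc X) (disc Y) := discHomTo (A := disc Y) f.

Definition sub (A : PosF) (P : forall x, car A x -> Prop) : PosF.
Proof.
  refine {| car := fun x => {a : car A x | P x a};
            le := fun x a b => le (proj1_sig a) (proj1_sig b) |}.
  - intros; apply le_refl.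
  - intros x a b c; apply le_trans.
  - intros x [a Ha] [b Hb] h1 h2; simpl in *.
    assert (a = b) by (apply le_antisym; assumption). subst.
    f_equal; apply proof_irrelevance.
Defined.

Definition incl (A : PosF) (P : forall x, car A x -> Prop) : Hom (sub P) A :=
  @Build_Hom (sub P) A (fun x (a : car (sub P) x) => proj1_sig a) (fun x a b h => h).

Definition prodP (A B : PosF) : PosF.
Proof.
  refine {| car := fun x => (car A x * car B x)%type;
            le := fun x p q => le (fst p) (fst q) /\ le (snd p) (snd q) |}.
  - intros; split; apply le_refl.
  - intros x a b c [h1 h2] [h3 h4]; split; eapply le_trans; eassumption.
  - intros x [a1 a2] [b1 b2] [h1 h2] [h3 h4]; simpl in *; f_equal; apply le_antisym; assumption.
Defined.

Definition fstH (A B : PosF) : Hom (prodP A B) A :=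
  @Build_Hom (prodP A B) A (fun x (p : car (prodP A B) x) => fst p) (fun x p q h => proj1 h).
Definition sndH (A B : PosF) : Hom (prodP A B) B :=
  @Build_Hom (prodP A B) B (fun x (p : car (prodP A B) x) => snd p) (fun x p q h => proj2 h).

Definition LeObj (A : PosF) : PosF :=
  sub (A := prodP A A) (fun x p => le (fst p) (snd p)).
Definition proj0 (A : PosF) : Hom (LeObj A) A := compH (@fstH A A) (incl _).
Definition proj1 (A : PosF) : Hom (LeObj A) A := compH (@sndH A A) (incl _).

Definition finiteF (X : Xi -> Type) : Prop :=
  exists l : list {x : Xi & X x}, forall x (a : X x), In (existT _ x a) l.
Definition sortfin (A : PosF) : Prop :=
  forall x, exists l : list (car A x), forall a, In a l.

Record Monad := {
  M : PosF -> PosF;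
  Mmap : forall A B, Hom A B -> Hom (M A) (M B);
  flat : forall A, Hom (M (M A)) (M A);
  sing : forall A, Hom A (M A);
  Mmap_id : forall A x (s : car (M A) x), Mmap (idH A) x s = s;
  Mmap_comp : forall A B C (f : Hom A B) (g : Hom B C) x (s : car (M A) x),
      Mmap (compH g f) x s = Mmap g x (Mmap f x s);
  sing_nat : forall A B (f : Hom A B) x (a : car A x),
      sing B x (f x a) = Mmap f x (sing A x a);
  flat_nat : forall A B (f : Hom A B) x (s : car (M (M A)) x),
      flat B x (Mmap (Mmap f) x s) = Mmap f x (flat A x s);
  flat_sing : forall A x (s : car (M A) x), flat A x (sing (M A) x s) = s;
  flat_Msing : forall A x (s : car (M A) x), flat A x (Mmap (sing A) x s) = s;
  flat_flat : forall A x (s : car (M (M (M A))) x),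
      flat A x (flat (M A) x s) = flat A x (Mmap (flat A) x s) }.
Arguments Mmap m {A B}.
Arguments flat m {A}.
Arguments sing m {A}.

Section MonadDefs.
Variable m : Monad.
Local Notation MM := (M m).
Local Notation Mm := (Mmap m).

Definition injectiveH (A B : PosF) (f : Hom A B) : Prop :=
  forall x (a b : car A x), f x a = f x b -> a = b.
Definition surjectiveH (A B : PosF) (f : Hom A B) : Prop :=
  forall x (b : car B x), exists a, f x a = b.

Definition preserves_injective : Prop :=
  forall A B (f : Hom A B), injectiveH f -> injectiveH (Mm f).
Definition preserves_surjective : Prop :=
  forall A B (f : Hom A B), surjectiveH f -> surjectiveH (Mm f).
Definition preserves_bijective : Prop :=
  forall A B (f : Hom A B), injectiveH f -> surjectiveH f ->
    injectiveH (Mm f) /\ surjectiveH (Mm f).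
(* M (f^-1[C]) = (Mf)^-1[MC] *)
Definition preserves_preimages : Prop :=
  forall A B (f : Hom A B) (P : forall x, car B x -> Prop) x (s : car (MM A) x),
    (exists u : car (MM (sub P)) x, Mm (incl P) x u = Mm f x s) <->
    (exists v : car (MM (sub (A := A) (fun y a => P y (f y a)))) x,
        Mm (incl _) x v = s).
Definition uses_standard_ordering : Prop :=
  forall A x (s t : car (MM A) x),
    le s t <-> exists u : car (MM (LeObj A)) x,
                 Mm (proj0 A) x u = s /\ Mm (proj1 A) x u = t.

Definition monad_assumptions : Prop :=
  preserves_injective /\ preserves_surjective /\ preserves_bijective /\
  preserves_preimages /\ uses_standard_ordering.

Record Alg := {
  acarr :> PosF;
  api : Hom (MM acarr) acarr;
  api_assoc : forall x (s : car (MM (MM acarr)) x),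
      api x (Mm api x s) = api x (flat m x s);
  api_unit : forall x (a : car acarr x), api x (sing m x a) = a }.

Record Alphabet := { acar :> Xi -> Type; afin : finiteF acar }.

Definition MS (S : Alphabet) : PosF := MM (disc S).
Definition language (S : Alphabet) x := car (MS S) x -> Prop.

(* the alphabet S + {hole of sort z} *)
Definition holeAlph (S : Alphabet) (z : Xi) : Alphabet.
Proof.
  refine {| acar := fun x => (S x + (x = z))%type |}.
  destruct (afin S) as [l Hl].
  exists (map (fun p => existT (fun x => (S x + (x = z))%type) (projT1 p) (inl (projT2 p))) l
          ++ (existT (fun x => (S x + (x = z))%type) z (inr eq_refl)) :: nil).
  intros x [a|e]; apply in_or_app.
  - left. exact (in_map (fun p => existT (fun x => (S x + (x = z))%type) (projT1 p) (inl (projT2 p))) l (existT _ x a) (Hl x a)).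
  - right. subst. left. reflexivity.
Defined.

(* substitution of s for the hole: the algebra morphism M(S+{hole}) -> MS
   extending hole |-> s, c |-> sing c *)
Definition subst_fun (S : Alphabet) (z : Xi) (s : car (MS S) z)
  : forall x, holeAlph S z x -> car (MS S) x :=
  fun x c => match c with
             | inl a => sing m x (a : car (disc S) x)
             | inr e => eq_rect z (car (MS S)) s x (eq_sym e)
             end.

Definition plug (S : Alphabet) (z : Xi) x (p : car (MS (holeAlph S z)) x)
  (s : car (MS S) z) : car (MS S) x :=
  flat m x (Mm (discHomTo (A := MS S) (subst_fun s)) x p).

Definition synle (S : Alphabet) x (K : language S x) z (s t : car (MS S) z) : Prop :=
  forall p : car (MS (holeAlph S z)) x, K (plug p s) -> K (plug p t).

Lemma synle_refl S x (K : language S x) z s : @synle S x K z s s.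
Proof. intros p h; exact h. Qed.
Lemma synle_trans S x (K : language S x) z s t u :
  @synle S x K z s t -> synle K t u -> synle K s u.
Proof. intros h1 h2 p h; apply h2, h1, h. Qed.

End MonadDefs.

Section Quot.
Variable A : PosF.
Variable R : forall x, car A x -> car A x -> Prop.
Arguments R : clear implicits.
Hypothesis Rrefl : forall x a, R x a a.
Hypothesis Rtrans : forall x a b c, R x a b -> R x b c -> R x a c.

Definition qclass x (a : car A x) : car A x -> Prop := fun b => R x a b /\ R x b a.

Definition quot : PosF.
Proof.
  refine {| car := fun x => {P : car A x -> Prop | exists a, P = qclass a};
            le := fun x P Q => exists a b, proj1_sig P a /\ proj1_sig Q b /\ R x a b |}.
  - intros x [P [a Ha]]; exists a, a; subst; simpl; unfold qclass; auto.
  - intros x [P [a Ha]] [Q [b Hb]] [U [c Hc]] [a1 [b1 [h1 [h2 h3]]]] [b2 [c2 [h4 [h5 h6]]]];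
      subst; simpl in *; unfold qclass in *.
    exists a1, c2; repeat split; try tauto.
    apply Rtrans with b1; [assumption|]. apply Rtrans with b; [tauto|].
    apply Rtrans with b2; tauto.
  - intros x [P HP] [Q HQ] [a1 [b1 [h1 [h2 h3]]]] [b2 [a2 [h4 [h5 h6]]]]; simpl in *.
    assert (E : P = Q).
    { destruct HP as [a Ha]; destruct HQ as [b Hb]; subst; unfold qclass in *.
      assert (Rab : R x a b) by
        (apply Rtrans with a1; [tauto|]; apply Rtrans with b1; [tauto|tauto]).
      assert (Rba : R x b a) by
        (apply Rtrans with b2; [tauto|]; apply Rtrans with a2; [tauto|tauto]).
      apply functional_extensionality; intro c; apply propositional_extensionality;
      split; intros [h7 h8]; split; eauto. }
    subst Q. f_equal. apply proof_irrelevance.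
Defined.

Definition qmap (Hle : forall x (a b : car A x), le a b -> R x a b) : Hom A quot.
Proof.
  refine (@Build_Hom A quot (fun x a => exist (fun P => exists a0, P = qclass a0) (qclass a) (ex_intro _ a eq_refl)) _).
  intros x a b h. exists a, b; simpl; unfold qclass; auto.
Defined.
End Quot.

Section Logics.
Variable m : Monad.

Record LogicFam := {
  Form : Alphabet -> Xi -> Type;
  sat : forall (S : Alphabet) x, car (MS m S) x -> Form S x -> Prop;
  lam : forall (S G : Alphabet), (forall x, S x -> G x) -> forall x, Form G x -> Form S x;
  lam_sat : forall (S G : Alphabet) (f : forall x, S x -> G x) x
      (s : car (MS m S) x) (phi : Form G x),
      sat s (lam f phi) <-> sat (Mmap m (discHom f) x s) phi }.

Variable L : LogicFam.

Definition Ldef (S : Alphabet) x (K : language m S x) : Prop :=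
  exists phi : Form L S x, forall s, K s <-> sat s phi.

Definition lattice_closed : Prop :=
  forall (S : Alphabet) x,
    Ldef (x := x) (S := S) (fun _ => False) /\ Ldef (x := x) (S := S) (fun _ => True) /\
    (forall K1 K2 : language m S x, Ldef K1 -> Ldef K2 -> Ldef (fun s => K1 s \/ K2 s)) /\
    (forall K1 K2 : language m S x, Ldef K1 -> Ldef K2 -> Ldef (fun s => K1 s /\ K2 s)).

Definition free_morphism (S G : Alphabet) (psi : Hom (MS m S) (MS m G)) : Prop :=
  forall x (s : car (M m (MS m S)) x), psi x (flat m x s) = flat m x (Mmap m psi x s).

Definition variety (V : forall (S : Alphabet) x, language m S x -> Prop) : Prop :=
  (forall S x, V S x (fun _ => False)) /\
  (forall S x, V S x (fun _ => True)) /\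
  (forall S x (K1 K2 : language m S x), V S x K1 -> V S x K2 -> V S x (fun s => K1 s \/ K2 s)) /\
  (forall S x (K1 K2 : language m S x), V S x K1 -> V S x K2 -> V S x (fun s => K1 s /\ K2 s)) /\
  (forall (S G : Alphabet) (psi : Hom (MS m S) (MS m G)), free_morphism psi ->
     forall x (K : language m G x), V G x K -> V S x (fun s => K (psi x s))) /\
  (forall S x (K : language m S x) z (p : car (MS m (holeAlph S z)) x),
     V S x K -> V S z (fun s => K (plug p s))).

Definition varietal : Prop := variety Ldef.

(* K has a syntactic algebra: the syntactic preorder is a congruence ordering
   with sort-wise finite quotient *)
Definition has_syntactic_algebra (S : Alphabet) x (K : language m S x) : Prop :=
  exists Hle : (forall z (s t : car (MS m S) z), le s t -> synle K s t),
    (forall z (s t : car (M m (MS m S)) z),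
        le (Mmap m (qmap (@synle_refl m S x K) (@synle_trans m S x K) Hle) z s)
           (Mmap m (qmap (@synle_refl m S x K) (@synle_trans m S x K) Hle) z t) ->
        synle K (flat m z s) (flat m z t)) /\
    sortfin (quot (@synle_refl m S x K) (@synle_trans m S x K)).

(* (B, h) realises Syn(K): h : MS -> B is a surjective algebra morphism whose
   kernel ordering is the syntactic preorder *)
Definition is_syntactic_algebra (S : Alphabet) x (K : language m S x)
  (B : Alg m) (h : Hom (MS m S) B) : Prop :=
  (forall z (s : car (M m (MS m S)) z), h z (flat m z s) = api B z (Mmap m h z s)) /\
  surjectiveH h /\
  (forall z (s t : car (MS m S) z), le (h z s) (h z t) <-> synle K s t).

(* L-definable algebras.  A finite subset C of B is given as the image of a
   sort-wise injective map e from an alphabet. *)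
Definition finitely_generated (B : Alg m) : Prop :=
  exists (S : Alphabet) (e : forall x, S x -> car B x),
    forall x (a : car B x), exists w : car (MS m S) x,
      api B x (Mmap m (discHomTo e) x w) = a.

Definition finitary (B : Alg m) : Prop := sortfin B /\ finitely_generated B.

Definition L_definably_embedded (B : Alg m) (S : Alphabet) (e : forall x, S x -> car B x) : Prop :=
  forall x (a : car B x),
    Ldef (S := S) (x := x) (fun w => le a (api B x (Mmap m (discHomTo e) x w))).

Definition L_definable_alg (B : Alg m) : Prop :=
  finitary B /\
  forall (S : Alphabet) (e : forall x, S x -> car B x),
    (forall x (a b : S x), e x a = e x b -> a = b) -> L_definably_embedded e.

End Logics.
End PosDefs.

Arguments is_syntactic_algebra {Xi m S x} K B h.
Arguments L_definable_alg {Xi m} L B.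
Arguments Ldef {Xi m} L {S x} K.
Arguments has_syntactic_algebra {Xi m S x} K.

From Stdlib Require Import List Classical ClassicalEpsilon ProofIrrelevance FunctionalExtensionality.
Set Implicit Arguments.

(* (1) => (2): Syn(K) is finite and generated by the letters.  If a = [v0], then the
   preimage of the up-set of a is the intersection of the derivatives p^-1[K] for
   finitely many contexts p with p[v0] in K, one separating v0 from each element of
   the finite sort that is not above a; hence it lies in the variety.  An arbitrary
   finite subset C of Syn(K) is reached by lifting its elements to M Sigma, which
   turns pi^-1(up a) /\ MC into an inverse image of that language.
   (2) => (1): Syn(K), the quotient of M Sigma by the congruence ordering of K,
   recognises K, its inverse images and its derivatives, since all of them are
   upward closed for the syntactic preorder.  Each is thus a finite union of
   languages pi^-1(up a) /\ MC, which are L-definable by (2). *)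

Section Development.
Variable Xi : Type.
Variable m : Monad Xi.

Lemma Hom_ext (A B : PosF Xi) (f g : Hom A B) :
  (forall x a, f x a = g x a) -> f = g.
Proof.
  destruct f as [f hf], g as [g hg]; simpl; intro H.
  assert (f = g) by (apply functional_extensionality_dep; intro x;
                     apply functional_extensionality; apply H).
  subst; f_equal; apply proof_irrelevance.
Qed.

Lemma Mmap_ext (A B : PosF Xi) (f g : Hom A B) x s :
  (forall x a, f x a = g x a) -> Mmap m f x s = Mmap m g x s.
Proof. intro H; rewrite (Hom_ext f g H); reflexivity. Qed.

Lemma Mmap_compH (A B C : PosF Xi) (f : Hom A B) (g : Hom B C) x s :
  Mmap m g x (Mmap m f x s) = Mmap m (compH g f) x s.
Proof. symmetry; apply Mmap_comp. Qed.

Lemma surjectiveH_section (A B : PosF Xi) (f : Hom A B) :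
  surjectiveH f -> exists g : forall x, car B x -> car A x, forall x b, f x (g x b) = b.
Proof.
  intro Hf.
  exists (fun x b => proj1_sig (constructive_indefinite_description _ (Hf x b))).
  intros x b; exact (proj2_sig (constructive_indefinite_description _ (Hf x b))).
Qed.

Lemma sortfin_image {A B : PosF Xi} (f : forall x, car A x -> car B x) :
  (forall x b, exists a, f x a = b) -> sortfin A -> sortfin B.
Proof.
  intros Hf HA x; destruct (HA x) as [l Hl]; exists (map (f x) l).
  intro b; destruct (Hf x b) as [a <-]; apply in_map, Hl.
Qed.

Lemma list_choice (A C : Type) (P : A -> Prop) (R : A -> C -> Prop) (l : list A) :
  (forall a, P a -> exists c, R a c) ->
  exists lc : list C, forall a, In a l -> P a -> exists c, In c lc /\ R a c.
Proof.
  intro HR; induction l as [|a l [lc Hlc]].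
  - exists nil; intros a [].
  - destruct (classic (P a)) as [Ha|Ha].
    + destruct (HR a Ha) as [c Hc]; exists (c :: lc).
      intros a' [<-|Ha'] Pa'; [exists c; simpl; auto|].
      destruct (Hlc a' Ha' Pa') as [c' [Hc' Rc']]; exists c'; simpl; auto.
    + exists lc; intros a' [<-|Ha'] Pa'; [contradiction|auto].
Qed.

Definition alg_morphism {S : Alphabet Xi} {B : Alg m} (h : Hom (MS m S) B) : Prop :=
  forall x (s : car (M m (MS m S)) x), h x (flat m _ x s) = api B x (Mmap m h x s).

Definition on_letters {S : Alphabet Xi} {B : PosF Xi} (h : Hom (MS m S) B) :
  forall x, S x -> car B x :=
  fun x c => h x (sing m (disc S) x c).

Lemma alg_morphism_eval {S : Alphabet Xi} {B : Alg m} {h : Hom (MS m S) B}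
  {e : forall x, S x -> car B x} :
  alg_morphism h -> (forall x c, on_letters h x c = e x c) ->
  forall x w, h x w = api B x (Mmap m (discHomTo e) x w).
Proof.
  intros Hh He x w.
  rewrite <- (@flat_Msing _ m (disc S) x w) at 1.
  rewrite Hh, Mmap_compH; f_equal; apply Mmap_ext; exact He.
Qed.

Lemma alg_morphism_finitely_generated (S : Alphabet Xi) (B : Alg m) (h : Hom (MS m S) B) :
  alg_morphism h -> surjectiveH h -> finitely_generated B.
Proof.
  intros Hh Hsurj; exists S, (on_letters h); intros x b.
  destruct (Hsurj x b) as [w <-]; exists w.
  symmetry; apply alg_morphism_eval; auto.
Qed.

Lemma alg_morphism_comp (S G : Alphabet Xi) (psi : Hom (MS m S) (MS m G))
  (B : Alg m) (h : Hom (MS m G) B) :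
  free_morphism psi -> alg_morphism h -> alg_morphism (compH h psi).
Proof. intros Hpsi Hh x s; simpl; rewrite Hpsi, Hh, Mmap_compH; reflexivity. Qed.

Definition kleisli {S G : Alphabet Xi} (g : forall x, S x -> car (MS m G) x) :
  Hom (MS m S) (MS m G) :=
  compH (flat m _) (Mmap m (discHomTo (A := MS m G) g)).

Lemma kleisli_free {S G : Alphabet Xi} (g : forall x, S x -> car (MS m G) x) :
  free_morphism (kleisli g).
Proof. intros x s; simpl; rewrite <- flat_nat, flat_flat, Mmap_compH; reflexivity. Qed.

Lemma kleisli_letter {S G : Alphabet Xi} (g : forall x, S x -> car (MS m G) x) x c :
  on_letters (kleisli g) x c = g x c.
Proof. unfold on_letters; simpl; rewrite <- (sing_nat m (discHomTo g)); apply flat_sing. Qed.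

Section QuotientAlgebra.
Context {S : Alphabet Xi} {R : forall x, car (MS m S) x -> car (MS m S) x -> Prop}.
Hypothesis Rrefl : forall x s, R x s s.
Hypothesis Rtrans : forall x s t u, R x s t -> R x t u -> R x s u.
Hypothesis Rle : forall x (s t : car (MS m S) x), le s t -> R x s t.

Local Notation Q := (quot Rrefl Rtrans).
Local Notation q := (qmap Rrefl Rtrans Rle).

Lemma qmap_surjective : surjectiveH q.
Proof.
  intros x [P HP]; pose proof HP as [a Ha]; exists a.
  subst P; simpl; f_equal; apply proof_irrelevance.
Qed.

Lemma qmap_le x (s t : car (MS m S) x) : le (q x s) (q x t) <-> R x s t.
Proof.
  split.
  - intros [a [b [[Hsa Has] [[Htb Hbt] Hab]]]]; eauto.
  - intro H; exists s, t; simpl; unfold qclass; auto.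
Qed.

Lemma qmap_eq x (s t : car (MS m S) x) : R x s t -> R x t s -> q x s = q x t.
Proof. intros H1 H2; apply le_antisym; apply qmap_le; assumption. Qed.

Hypothesis Rcong : forall x (s t : car (M m (MS m S)) x),
  le (Mmap m q x s) (Mmap m q x t) -> R x (flat m _ x s) (flat m _ x t).
Hypothesis Hsurj : preserves_surjective m.

(* The structure map evaluates any [M q]-preimage; [Rcong] makes the choice irrelevant. *)
Definition quot_api_fun x (u : car (M m Q) x) : car Q x :=
  q x (flat m _ x (proj1_sig (constructive_indefinite_description _ (Hsurj qmap_surjective x u)))).

Lemma quot_api_spec x (s : car (M m (MS m S)) x) :
  quot_api_fun x (Mmap m q x s) = q x (flat m _ x s).
Proof.
  unfold quot_api_fun; destruct (constructive_indefinite_description _ _) as [s' Hs']; simpl.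
  apply qmap_eq; apply Rcong; rewrite Hs'; apply le_refl.
Qed.

Lemma quot_api_mono x (u v : car (M m Q) x) : le u v -> le (quot_api_fun x u) (quot_api_fun x v).
Proof.
  destruct (Hsurj qmap_surjective x u) as [s <-].
  destruct (Hsurj qmap_surjective x v) as [t <-].
  intro H; rewrite !quot_api_spec; apply qmap_le, Rcong, H.
Qed.

Definition quot_api : Hom (M m Q) Q := Build_Hom quot_api_mono.

Lemma quot_api_assoc x (U : car (M m (M m Q)) x) :
  quot_api x (Mmap m quot_api x U) = quot_api x (flat m Q x U).
Proof.
  destruct (Hsurj (Hsurj qmap_surjective) x U) as [SS <-].
  rewrite Mmap_compH.
  rewrite (Mmap_ext (compH quot_api (Mmap m q)) (compH q (flat m _)));
    [|intros y a; apply quot_api_spec].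
  rewrite <- Mmap_compH; simpl.
  rewrite quot_api_spec, flat_nat, quot_api_spec, flat_flat; reflexivity.
Qed.

Lemma quot_api_unit x (a : car Q x) : quot_api x (sing m Q x a) = a.
Proof.
  destruct (qmap_surjective a) as [s <-].
  rewrite sing_nat; simpl; rewrite quot_api_spec, flat_sing; reflexivity.
Qed.

Definition quot_alg : Alg m := Build_Alg quot_api_assoc quot_api_unit.

Lemma quot_alg_morphism : alg_morphism (B := quot_alg) q.
Proof. intros x s; symmetry; apply quot_api_spec. Qed.

End QuotientAlgebra.

Lemma plug_hole (S : Alphabet Xi) x (s : car (MS m S) x) :
  plug (sing m (disc (holeAlph S x)) x (inr eq_refl)) s = s.
Proof. unfold plug; rewrite <- sing_nat; apply flat_sing. Qed.

Lemma synle_upclosed (S : Alphabet Xi) x (K : language m S x) s t :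
  K s -> synle K s t -> K t.
Proof. intros Ks Hst; rewrite <- plug_hole; apply Hst; rewrite plug_hole; exact Ks. Qed.

Lemma syntactic_algebra_exists (S : Alphabet Xi) x (K : language m S x) :
  preserves_surjective m -> has_syntactic_algebra K ->
  exists B h, is_syntactic_algebra K B h.
Proof.
  intros Hsurj [Hle [Hcong _]].
  exists (quot_alg _ _ Hle Hcong Hsurj), (qmap _ _ Hle).
  split; [apply quot_alg_morphism|split; [apply qmap_surjective|apply qmap_le]].
Qed.

Section Syntactic.
Variables (S : Alphabet Xi) (x : Xi) (K : language m S x).
Variables (B : Alg m) (h : Hom (MS m S) B).
Hypothesis Hsyn : is_syntactic_algebra K B h.

Lemma syntactic_saturated z (D : language m S z) :
  (forall s t, synle K s t -> D s -> D t) ->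
  forall s, D s <-> exists a, (exists s0, D s0 /\ h z s0 = a) /\ le a (h z s).
Proof.
  destruct Hsyn as [_ [_ Hiff]]; intros HD s; split.
  - intro Ds; exists (h z s); split; [exists s; auto|apply le_refl].
  - intros [a [[s0 [Ds0 <-]] Hle]]; apply (HD s0); [apply Hiff, Hle|exact Ds0].
Qed.

Lemma syntactic_sortfin : has_syntactic_algebra K -> sortfin B.
Proof.
  intros [Hle [_ Hfin]]; destruct Hsyn as [_ [Hsurj Hiff]].
  set (q := qmap (@synle_refl _ m S x K) (@synle_trans _ m S x K) Hle).
  assert (Hq : surjectiveH q) by apply qmap_surjective.
  assert (Hqle : forall z (s t : car (MS m S) z), le (q z s) (q z t) <-> synle K s t)
    by apply qmap_le.
  destruct (surjectiveH_section Hq) as [rep Hrep].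
  apply (sortfin_image (fun z c => h z (rep z c))); [|exact Hfin].
  intros z b; destruct (Hsurj z b) as [v <-]; exists (q z v).
  apply le_antisym; apply Hiff, Hqle; rewrite Hrep; apply le_refl.
Qed.

End Syntactic.

Variable L : LogicFam m.

Lemma Ldef_ext (S : Alphabet Xi) x (K1 K2 : language m S x) :
  (forall s, K1 s <-> K2 s) -> Ldef L K1 -> Ldef L K2.
Proof. intros H [phi Hp]; exists phi; intro s; rewrite <- H; apply Hp. Qed.

Definition image_alphabet {S : Alphabet Xi} {B : PosF Xi} (e : forall x, S x -> car B x) :
  Alphabet Xi.
Proof.
  refine {| acar := fun x => {b : car B x | exists c, e x c = b} |}.
  destruct (afin S) as [l Hl].
  set (f := fun p : {x : Xi & S x} => existT (fun x => {b : car B x | exists c, e x c = b})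
              (projT1 p) (exist _ (e _ (projT2 p)) (ex_intro _ (projT2 p) eq_refl))).
  exists (map f l); intros x [b Hb].
  pose proof Hb as [c Hc]; subst b.
  rewrite (proof_irrelevance _ Hb (ex_intro _ c eq_refl)).
  exact (in_map f l (existT _ x c) (Hl x c)).
Defined.

(* [L_definable_alg] only speaks of injectively given finite subsets; a general [e]
   factors through the inclusion of its image. *)
Lemma L_definable_alg_upset {B : Alg m} {S : Alphabet Xi} (e : forall x, S x -> car B x)
  x (a : car B x) :
  L_definable_alg L B ->
  Ldef L (S := S) (x := x) (fun w => le a (api B x (Mmap m (discHomTo e) x w))).
Proof.
  intros [_ HB].
  set (C := image_alphabet e).
  set (eC := fun x (c : C x) => proj1_sig c).
  assert (HeC : forall x (c d : C x), eC x c = eC x d -> c = d).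
  { intros y [c Hc] [d Hd]; unfold eC; simpl; intros <-; f_equal; apply proof_irrelevance. }
  destruct (HB C eC HeC x a) as [phi Hphi].
  set (toC := fun x (c : S x) => (exist _ (e x c) (ex_intro _ c eq_refl) : C x)).
  exists (lam toC phi); intro w; rewrite lam_sat, <- Hphi, Mmap_compH.
  rewrite (Mmap_ext (compH (discHomTo eC) (discHom toC)) (discHomTo e)); reflexivity.
Qed.

Section LatticeClosed.
Hypothesis Hlat : lattice_closed L.

Lemma Ldef_bigcup (S : Alphabet Xi) x (I : Type) (P : I -> Prop)
  (D : I -> language m S x) (l : list I) :
  (forall i, P i -> Ldef L (D i)) -> Ldef L (fun w => exists i, In i l /\ P i /\ D i w).
Proof.
  intro HD; destruct (Hlat S x) as [Hfalse [_ [Hcup _]]].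
  induction l as [|i l IH].
  - eapply Ldef_ext; [|exact Hfalse]; intro w; split; [tauto|intros [i [[] _]]].
  - destruct (classic (P i)) as [Pi|Pi].
    + eapply Ldef_ext; [|exact (Hcup _ _ (HD i Pi) IH)]; intro w; split.
      * intros [Dw|[j [Hj Rj]]]; [exists i|exists j]; simpl; tauto.
      * intros [j [[<-|Hj] Rj]]; [left; tauto|right; exists j; tauto].
    + eapply Ldef_ext; [|exact IH]; intro w; split.
      * intros [j Hj]; exists j; simpl; tauto.
      * intros [j [[<-|Hj] Rj]]; [tauto|exists j; tauto].
Qed.

Lemma Ldef_bigcap (S : Alphabet Xi) x (I : Type) (P : I -> Prop)
  (D : I -> language m S x) (l : list I) :
  (forall i, P i -> Ldef L (D i)) -> Ldef L (fun w => forall i, In i l -> P i -> D i w).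
Proof.
  intro HD; destruct (Hlat S x) as [_ [Htrue [_ Hcap]]].
  induction l as [|i l IH].
  - eapply Ldef_ext; [|exact Htrue]; intro w; split; [intros _ i []|tauto].
  - destruct (classic (P i)) as [Pi|Pi].
    + eapply Ldef_ext; [|exact (Hcap _ _ (HD i Pi) IH)]; intro w; split.
      * intros [Dw Hw] j [<-|Hj] Pj; auto.
      * intro Hw; split; [apply Hw; simpl; auto|intros j Hj; apply Hw; simpl; auto].
    + eapply Ldef_ext; [|exact IH]; intro w; split.
      * intros Hw j [<-|Hj] Pj; [contradiction|auto].
      * intros Hw j Hj; apply Hw; simpl; auto.
Qed.

Lemma Ldef_alg_morphism_union {B : Alg m} {S : Alphabet Xi} {f : Hom (MS m S) B}
  {x : Xi} (U : car B x -> Prop) :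
  L_definable_alg L B -> alg_morphism f ->
  Ldef L (fun w => exists a, U a /\ le a (f x w)).
Proof.
  intros HB Hf; pose proof HB as [[Hfin _] _]; destruct (Hfin x) as [l Hl].
  eapply Ldef_ext;
    [|exact (Ldef_bigcup U _ l (fun a _ => L_definable_alg_upset (on_letters f) x a HB))].
  intro w; rewrite (alg_morphism_eval Hf (fun _ _ => eq_refl) x w); split.
  - intros [a [_ Ha]]; exists a; exact Ha.
  - intros [a Ha]; exists a; split; [apply Hl|exact Ha].
Qed.

Section VarietalToDefinable.
Hypothesis Hvar : varietal L.
Variables (S : Alphabet Xi) (x : Xi) (K : language m S x).
Variables (B : Alg m) (h : Hom (MS m S) B).
Hypothesis HK : Ldef L K.
Hypothesis Hsyn : is_syntactic_algebra K B h.

Lemma syntactic_upset_Ldef z (a : car B z) :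
  sortfin B -> Ldef L (fun v => le a (h z v)).
Proof.
  intro Hfin; destruct Hsyn as [_ [Hsurj Hiff]].
  destruct (Hsurj z a) as [v0 <-]; destruct (Hfin z) as [l Hl].
  assert (Hsep : forall b, ~ le (h z v0) b ->
            exists p, K (plug p v0) /\ forall v, h z v = b -> ~ K (plug p v)).
  { intros b Hb; destruct (Hsurj z b) as [vb <-].
    assert (Hn : ~ synle K v0 vb) by (rewrite <- Hiff; exact Hb).
    destruct (not_all_ex_not _ _ Hn) as [p Hp]; apply imply_to_and in Hp.
    exists p; split; [apply Hp|]; intros v Hv Kv; apply (proj2 Hp).
    apply (Hiff z v vb); [rewrite Hv; apply le_refl|exact Kv]. }
  destruct (list_choice _ _ l Hsep) as [ps Hps].
  assert (Hder : forall p : car (MS m (holeAlph S z)) x, Ldef L (fun v => K (plug p v))).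
  { intro p; destruct Hvar as (_ & _ & _ & _ & _ & Hder); exact (Hder S x K z p HK). }
  eapply Ldef_ext;
    [|exact (Ldef_bigcap (fun p => K (plug p v0)) (fun p v => K (plug p v)) ps (fun p _ => Hder p))].
  intro v; split.
  - intro Hv; apply NNPP; intro Hn.
    destruct (Hps (h z v) (Hl _) Hn) as [p [Hp [Kp Hnot]]].
    exact (Hnot v eq_refl (Hv p Hp Kp)).
  - intros Hv p _ Kp; apply Hiff in Hv; exact (Hv p Kp).
Qed.

Lemma varietal_syntactic_L_definable : has_syntactic_algebra K -> L_definable_alg L B.
Proof.
  intro HKsyn; pose proof (syntactic_sortfin Hsyn HKsyn) as Hfin.
  destruct Hsyn as [Hmor [Hsurj _]].
  split; [split; [exact Hfin|exact (alg_morphism_finitely_generated Hmor Hsurj)]|].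
  intros S' e _ z a.
  destruct (surjectiveH_section Hsurj) as [sec Hsec].
  set (psi := kleisli (fun y (c : S' y) => sec y (e y c))).
  destruct Hvar as (_ & _ & _ & _ & Hinv & _).
  assert (Heval : forall w, h z (psi z w) = api B z (Mmap m (discHomTo e) z w)).
  { apply (alg_morphism_eval (h := compH h psi)).
    - exact (alg_morphism_comp (kleisli_free _) Hmor).
    - intros y c; change (h y (on_letters psi y c) = e y c).
      unfold psi; rewrite kleisli_letter; apply Hsec. }
  eapply Ldef_ext; [|exact (Hinv S' S psi (kleisli_free _) z _ (syntactic_upset_Ldef z a Hfin))].
  intro w; cbv beta; rewrite Heval; reflexivity.
Qed.

End VarietalToDefinable.

Section DefinableToVarietal.
Variables (G : Alphabet Xi) (x : Xi) (K : language m G x).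
Variables (B : Alg m) (h : Hom (MS m G) B).
Hypothesis Hsyn : is_syntactic_algebra K B h.
Hypothesis HB : L_definable_alg L B.

Lemma syntactic_inverse_Ldef (S : Alphabet Xi) (psi : Hom (MS m S) (MS m G)) :
  free_morphism psi -> Ldef L (fun w => K (psi x w)).
Proof.
  intro Hpsi; pose proof Hsyn as [Hmor _].
  eapply Ldef_ext; [|exact (Ldef_alg_morphism_union (fun a => exists s0, K s0 /\ h x s0 = a)
                              HB (alg_morphism_comp Hpsi Hmor))].
  intro w; symmetry; apply (syntactic_saturated Hsyn K).
  intros s t Hst Ks; exact (synle_upclosed Ks Hst).
Qed.

Lemma syntactic_derivative_Ldef z (p : car (MS m (holeAlph G z)) x) :
  Ldef L (fun w => K (plug p w)).
Proof.
  pose proof Hsyn as [Hmor _].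
  eapply Ldef_ext; [|exact (Ldef_alg_morphism_union (fun a => exists s0, K (plug p s0) /\ h z s0 = a)
                              HB Hmor)].
  intro w; symmetry; apply (syntactic_saturated Hsyn (fun s => K (plug p s))).
  intros s t Hst; apply Hst.
Qed.

End DefinableToVarietal.

Lemma syntactic_L_definable_varietal :
  (forall S x (K : language m S x), Ldef L K ->
     exists B h, is_syntactic_algebra K B h /\ L_definable_alg L B) ->
  varietal L.
Proof.
  intro Hdef.
  split; [|split; [|split; [|split; [|split]]]];
    try (intros S x; destruct (Hlat S x) as (? & ? & ? & ?); assumption).
  - intros S G psi Hpsi x K HK; destruct (Hdef G x K HK) as [B [h [Hsyn HB]]].
    exact (syntactic_inverse_Ldef Hsyn HB Hpsi).
  - intros S x K z p HK; destruct (Hdef S x K HK) as [B [h [Hsyn HB]]].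
    exact (syntactic_derivative_Ldef Hsyn HB z p).
Qed.

End LatticeClosed.
End Development.

Theorem theorem9p9 (Xi : Type) (m : Monad Xi) (Hm : monad_assumptions m)
  (L : LogicFam m) (Hlat : lattice_closed L)
  (Hsyn : forall (S : Alphabet Xi) (x : Xi) (K : language m S x),
            Ldef L K -> has_syntactic_algebra K) :
  varietal L <->
  (forall (S : Alphabet Xi) (x : Xi) (K : language m S x), Ldef L K ->
     forall (B : Alg m) (h : Hom (MS m S) B),
       is_syntactic_algebra K B h -> L_definable_alg L B).
Proof.
  destruct Hm as (_ & Hsurj & _).
  split.
  - intros Hvar S x K HK B h HsynB.
    exact (varietal_syntactic_L_definable Hlat Hvar HK HsynB (Hsyn S x K HK)).
  - intro Hdef; apply (syntactic_L_definable_varietal Hlat); intros S x K HK.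
    destruct (syntactic_algebra_exists Hsurj (Hsyn S x K HK)) as [B [h HsynB]].
    exists B, h; split; [exact HsynB|exact (Hdef S x K HK B h HsynB)].
Qed.
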